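(* Let $2\le n\le k$, $\alpha\in\mathbb N$, let $s_1,\dots,s_{n-1}$ be nonnegative integers, and let $$w=[x_1,x_2]^{\alpha^{s_1}}[x_2,x_3]^{\alpha^{s_2}}\cdots[x_{n-1},x_n]^{\alpha^{s_{n-1}}}\in F_k.$$ Let $n'=2\lfloor n/2\rfloor$. Then there exist nonnegative integers $t_1,t_3,\dots,t_{n'-1}$, each lying in $\{0,1\}\cup\{\alpha^{r}: r \text{ a positive integer}\}$, such that on any nilpotent group $G$ of nilpotency class $2$ the word $w$ is $F_k(G)$-automorphic to $[x_1,x_2]^{t_1}[x_3,x_4]^{t_3}\cdots[x_{n'-1},x_{n'}]^{t_{n'-1}}$.
   Context: $F_k$ is the free group on $x_1,\dots,x_k$. For a group $G$, each $w\in F_k$ induces a word map $G^k\to G$ by evaluation; the set $F_k(G)$ of all such word maps is a group under pointwise multiplication (the image of $F_k$ under $w\mapsto$ its word map). Two words $w_1,w_2\in F_k$ are called $F_k(G)$-automorphic if there is a group automorphism of $F_k(G)$ sending the word map of $w_1$ to the word map of $w_2$. Commutators are $[a,b]:=aba^{-1}b^{-1}$. *)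

From mathcomp Require Import all_boot.
Set Implicit Arguments. Unset Strict Implicit. Unset Printing Implicit Defensive.

Record Grp := {
  gcar :> Type;
  gmul : gcar -> gcar -> gcar;
  gone : gcar;
  ginv : gcar -> gcar;
  gmulA : forall x y z, gmul x (gmul y z) = gmul (gmul x y) z;
  gmul1l : forall x, gmul gone x = x;
  gmulVl : forall x, gmul (ginv x) x = gone }.

Definition gcomm (G : Grp) (a b : G) : G :=
  gmul a (gmul b (gmul (ginv a) (ginv b))).

Definition nil_class2 (G : Grp) : Prop :=
  (forall x y z : G, gmul (gcomm x y) z = gmul z (gcomm x y)) /\
  (exists x y : G, gcomm x y <> gone G).

(* Words in x_1..x_k, i.e. (representatives of) elements of F_k. *)
Inductive word (k : nat) : Type :=
| wvar of 'I_k
| wone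
| wmul of word k & word k
| winv of word k.

Definition wcomm k (a b : word k) : word k :=
  wmul a (wmul b (wmul (winv a) (winv b))).

Fixpoint wpow k (a : word k) (m : nat) : word k :=
  if m is m'.+1 then wmul a (wpow a m') else wone k.

Definition wprod k (s : seq (word k)) : word k := foldr (@wmul k) (wone k) s.

(* variable with 0-based index i (i.e. x_{i+1}); only used with i < k *)
Definition xvar k (i : nat) : word k :=
  if insub i is Some o then wvar o else wone k.

Fixpoint wmap (G : Grp) k (w : word k) (g : 'I_k -> G) : G :=
  match w with
  | wvar i => g i
  | wone => gone G
  | wmul a b => gmul (wmap a g) (wmap b g)
  | winv a => ginv (wmap a g)
  end.

Definition is_wordmap (G : Grp) k (f : ('I_k -> G) -> G) : Prop :=
  exists w : word k, f = wmap w.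

Definition Fk_aut (G : Grp) k (phi : (('I_k -> G) -> G) -> (('I_k -> G) -> G)) : Prop :=
  [/\ (forall f, is_wordmap f -> is_wordmap (phi f)),
      (forall f1 f2, is_wordmap f1 -> is_wordmap f2 ->
          phi (fun g => gmul (f1 g) (f2 g)) = (fun g => gmul (phi f1 g) (phi f2 g))),
      (forall f1 f2, is_wordmap f1 -> is_wordmap f2 -> phi f1 = phi f2 -> f1 = f2)
    & (forall f2, is_wordmap f2 -> exists2 f1, is_wordmap f1 & phi f1 = f2)].

Definition Fk_automorphic (G : Grp) k (w1 w2 : word k) : Prop :=
  exists phi, Fk_aut phi /\ phi (wmap (G := G) w1) = wmap w2.

Definition chain_word k (n a : nat) (s : nat -> nat) : word k :=
  wprod [seq wpow (wcomm (xvar k i.-1) (xvar k i)) (a ^ s i) | i <- iota 1 n.-1].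

Definition pair_word k (n : nat) (t : nat -> nat) : word k :=
  wprod [seq wpow (wcomm (xvar k (m.*2)) (xvar k (m.*2.+1))) (t (m.*2.+1)) | m <- iota 0 n./2].

(* When commutators are central, [x z^q, y] = [x,y] [z,y]^q and [x, y z^q] =
   [x,y] [x,z]^q.  Transvections x_i -> x_i x_j^q and permutations of the
   variables are invertible substitutions, so precomposition with them is an
   automorphism of F_k(G).  Write the chain word as c_{e_1}(x_1,x_2) ...
   c_{e_{n-1}}(x_{n-1},x_n) with c_e(x,y) = [x,y]^(a^e) and pick a local minimum
   e_j of the exponents.  At most two transvections cancel the neighbouring links
   and splice them into c_{e_{j-1}-e_j+e_{j+1}}(x_{j-1},x_{j+2}); a rotation of the
   variables brings the isolated pair c_{e_j}(x_j,x_{j+1}) to the front.  By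
   induction the chain is automorphic to disjoint pairs c_{t_1}(x_1,x_2)
   c_{t_3}(x_3,x_4) ..., whose exponents a^(t_i) are 1 or powers of a. *)

From mathcomp Require Import all_boot zify.
From Stdlib Require Import FunctionalExtensionality.
Set Implicit Arguments. Unset Strict Implicit. Unset Printing Implicit Defensive.

Fixpoint gpow (G : Grp) (x : G) (n : nat) : G :=
  if n is n'.+1 then gmul x (gpow x n') else gone G.

Definition central (G : Grp) (z : G) : Prop := forall w, gmul z w = gmul w z.

Definition comm_central (G : Grp) : Prop :=
  forall x y z : G, gmul (gcomm x y) z = gmul z (gcomm x y).

Section GroupLaws.
Variable G : Grp.
Implicit Types x y z w : G.

Lemma gmulV x : gmul x (ginv x) = gone G.
Proof.
have e : gmul x (ginv x) = gmul (gmul (ginv (ginv x)) (ginv x)) (gmul x (ginv x)).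
  by rewrite gmulVl gmul1l.
by rewrite e -gmulA (gmulA (ginv x)) gmulVl gmul1l gmulVl.
Qed.

Lemma gmul1r x : gmul x (gone G) = x.
Proof. by rewrite -(gmulVl x) gmulA gmulV gmul1l. Qed.

Lemma gmulKl x y : gmul (ginv x) (gmul x y) = y.
Proof. by rewrite gmulA gmulVl gmul1l. Qed.

Lemma ginvK x : ginv (ginv x) = x.
Proof. by rewrite -[RHS]gmul1l -(gmulVl (ginv x)) -gmulA gmulVl gmul1r. Qed.

Lemma ginv_uniq x y : gmul x y = gone G -> ginv x = y.
Proof. by move=> e; rewrite -(gmulKl x y) e gmul1r. Qed.

Lemma ginvM x y : ginv (gmul x y) = gmul (ginv y) (ginv x).
Proof. by apply: ginv_uniq; rewrite -gmulA (gmulA y) gmulV gmul1l gmulV. Qed.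

Lemma ginv1 : ginv (gone G) = gone G.
Proof. by apply: ginv_uniq; rewrite gmul1l. Qed.

Lemma gpowD x m n : gpow x (m + n) = gmul (gpow x m) (gpow x n).
Proof. by elim: m => [|m IH] /=; rewrite ?gmul1l // IH gmulA. Qed.

Lemma gpowM x m n : gpow x (m * n) = gpow (gpow x m) n.
Proof. by elim: n => [|n IH]; rewrite ?muln0 // mulnS gpowD IH. Qed.

Lemma gpowSr x n : gpow x n.+1 = gmul (gpow x n) x.
Proof. by rewrite -addn1 gpowD /= gmul1r. Qed.

Lemma gpowVK x n : gmul (gpow (ginv x) n) (gpow x n) = gone G.
Proof.
elim: n => [|n IH]; first by rewrite /= gmul1l.
by rewrite gpowSr {2}/gpow -/gpow -gmulA (gmulA (ginv x)) gmulVl gmul1l IH.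
Qed.

Lemma gpowKV x n : gmul (gpow x n) (gpow (ginv x) n) = gone G.
Proof. by rewrite -{1}(ginvK x) gpowVK. Qed.

Lemma central_pow z n : central z -> central (gpow z n).
Proof.
move=> cz w; elim: n => [|n IH] /=; first by rewrite gmul1l gmul1r.
by rewrite -gmulA IH gmulA cz -gmulA.
Qed.

Lemma gpowMc x y n : central y -> gpow (gmul x y) n = gmul (gpow x n) (gpow y n).
Proof.
move=> cy; elim: n => [|n IH] /=; first by rewrite gmul1l.
by rewrite IH -!gmulA; congr gmul; rewrite !gmulA cy.
Qed.

Lemma central_swap z x y : central z -> gmul x (gmul z y) = gmul z (gmul x y).
Proof. by move=> cz; rewrite gmulA -cz gmulA. Qed.

Lemma gcommV x y : ginv (gcomm x y) = gcomm y x.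
Proof. by rewrite /gcomm !ginvM !ginvK -!gmulA. Qed.

Lemma gcommX_cancel x y n w :
  gmul (gpow (gcomm y x) n) (gmul (gpow (gcomm x y) n) w) = w.
Proof. by rewrite -gcommV gmulA gpowVK gmul1l. Qed.

Lemma gcommX_cancelV x y n w :
  gmul (gpow (gcomm x y) n) (gmul (gpow (gcomm y x) n) w) = w.
Proof. by rewrite -(gcommV x y) gmulA gpowKV gmul1l. Qed.

End GroupLaws.

Section ClassTwo.
Variables (G : Grp) (HG : comm_central G).
Implicit Types x y z : G.

Lemma central_gcommX x y n : central (gpow (gcomm x y) n).
Proof. by apply: central_pow => w; apply: HG. Qed.

Lemma gcommMl x y z : gcomm (gmul x y) z = gmul (gcomm x z) (gcomm y z).
Proof.
rewrite (HG x z (gcomm y z)) [gcomm x z]/gcomm (gmulA (gcomm y z) x) (HG y z x).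
by rewrite /gcomm ginvM -!gmulA (gmulKl z).
Qed.

Lemma gcommMr x y z : gcomm x (gmul y z) = gmul (gcomm x y) (gcomm x z).
Proof. by rewrite -(gcommV (gmul y z)) gcommMl // ginvM !gcommV HG. Qed.

Lemma gcommXl x z n : gcomm (gpow x n) z = gpow (gcomm x z) n.
Proof.
elim: n => [|n IH] /=; last by rewrite gcommMl // IH.
by rewrite /gcomm ginv1 !gmul1l gmulV.
Qed.

Lemma gcommXr x z n : gcomm x (gpow z n) = gpow (gcomm x z) n.
Proof.
elim: n => [|n IH] /=; last by rewrite gcommMr // IH.
by rewrite /gcomm ginv1 gmul1l gmul1r gmulV.
Qed.

Lemma gcommX_transl x z y q A :
  gpow (gcomm (gmul x (gpow z q)) y) A =
  gmul (gpow (gcomm x y) A) (gpow (gcomm z y) (q * A)).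
Proof. by rewrite gcommMl gcommXl gpowMc ?gpowM //; apply: central_gcommX. Qed.

Lemma gcommX_transr x y z q A :
  gpow (gcomm x (gmul y (gpow z q))) A =
  gmul (gpow (gcomm x y) A) (gpow (gcomm x z) (q * A)).
Proof. by rewrite gcommMr gcommXr gpowMc ?gpowM //; apply: central_gcommX. Qed.

End ClassTwo.

Lemma wmap_pow (G : Grp) k (w : word k) n (g : 'I_k -> G) :
  wmap (wpow w n) g = gpow (wmap w g) n.
Proof. by elim: n => //= n ->. Qed.

Fixpoint wsubst k (w : word k) (u : 'I_k -> word k) : word k :=
  match w with
  | wvar i => u i
  | wone => wone k
  | wmul a b => wmul (wsubst a u) (wsubst b u)
  | winv a => winv (wsubst a u)
  end.

Lemma wmap_subst (G : Grp) k (w : word k) u (g : 'I_k -> G) :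
  wmap (wsubst w u) g = wmap w (fun i => wmap (u i) g).
Proof. by elim: w => //= [a -> b ->|a ->]. Qed.

Definition automorphic (G : Grp) k (F1 F2 : ('I_k -> G) -> G) : Prop :=
  exists phi, Fk_aut phi /\ phi F1 = F2.

Section Automorphic.
Variables (G : Grp) (k : nat).
Implicit Types F : ('I_k -> G) -> G.

Lemma subst_aut (u v : 'I_k -> word k) :
  (forall g : 'I_k -> G, (fun i => wmap (v i) (fun j => wmap (u j) g)) = g) ->
  (forall g : 'I_k -> G, (fun i => wmap (u i) (fun j => wmap (v j) g)) = g) ->
  Fk_aut (fun f : ('I_k -> G) -> G => fun g => f (fun i => wmap (u i) g)).
Proof.
move=> vu uv; split.
- move=> f [w ->]; exists (wsubst w u); apply: functional_extensionality => g.
  by rewrite wmap_subst.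
- by [].
- move=> f1 f2 _ _ E; apply: functional_extensionality => g.
  by have := congr1 (fun F => F (fun i => wmap (v i) g)) E => /=; rewrite uv.
- move=> f2 [w ->]; exists (wmap (wsubst w v)); first by exists (wsubst w v).
  by apply: functional_extensionality => g; rewrite wmap_subst vu.
Qed.

Lemma automorphic_refl F : automorphic F F.
Proof. by exists id; split => //; split => // f2 w; exists f2. Qed.

Lemma automorphic_trans F1 F2 F3 :
  automorphic F1 F2 -> automorphic F2 F3 -> automorphic F1 F3.
Proof.
move=> [phi1 [[a1 b1 c1 d1] e1]] [phi2 [[a2 b2 c2 d2] e2]].
exists (fun f => phi2 (phi1 f)); split; last by rewrite e1.
split.
- by move=> f /a1 /a2.
- by move=> f1 f2 w1 w2; rewrite b1 // b2 //; apply: a1.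
- by move=> f1 f2 w1 w2 /c2 E; apply: c1 => //; apply: E; apply: a1.
- move=> f3 /d2 [f2 w2 <-]; have [f1 w1 e] := d1 f2 w2.
  by exists f1 => //; rewrite e.
Qed.

End Automorphic.

(* To index variables by plain numbers, an assignment g of the k variables is
   extended to all of nat by the value of xvar, i.e. by 1 beyond k. *)
Definition assign (G : Grp) k (g : 'I_k -> G) (m : nat) : G := wmap (xvar k m) g.

Lemma assignE (G : Grp) k (g : 'I_k -> G) (o : 'I_k) : assign g o = g o.
Proof. by rewrite /assign /xvar valK. Qed.

Lemma assign_lt (G : Grp) k (g : 'I_k -> G) m (mk : m < k) :
  assign g m = g (Ordinal mk).
Proof. by rewrite -assignE. Qed.

Lemma assign_ge (G : Grp) k (g : 'I_k -> G) m : k <= m -> assign g m = gone G.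
Proof. by move=> km; rewrite /assign /xvar insubN // -leqNgt. Qed.

Definition aut_equiv (G : Grp) k (P Q : (nat -> G) -> G) : Prop :=
  automorphic (fun g : 'I_k -> G => P (assign g)) (fun g => Q (assign g)).

Definition upd (G : Grp) (h : nat -> G) (i : nat) (x : G) : nat -> G :=
  fun m => if m == i then x else h m.

Lemma upd_eq (G : Grp) (h : nat -> G) i x : upd h i x i = x.
Proof. by rewrite /upd eqxx. Qed.

Lemma upd_neq (G : Grp) (h : nat -> G) i x m : m != i -> upd h i x m = h m.
Proof. by rewrite /upd => /negbTE ->. Qed.

Definition perm_below (k : nat) (f f' : nat -> nat) : Prop :=
  [/\ forall m, m < k -> f m < k, forall m, m < k -> f' m < k,
      forall m, m < k -> f (f' m) = m, forall m, m < k -> f' (f m) = m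
    & forall m, k <= m -> f m = m].

Section ElementaryMoves.
Variables (G : Grp) (k : nat).
Implicit Types P Q : (nat -> G) -> G.

Lemma aut_equiv_trans P1 P2 P3 :
  aut_equiv k P1 P2 -> aut_equiv k P2 P3 -> aut_equiv k P1 P3.
Proof. exact: automorphic_trans. Qed.

Lemma aut_equiv_eq P Q : (forall h, P h = Q h) -> aut_equiv k P Q.
Proof. by move=> /functional_extensionality ->; apply: automorphic_refl. Qed.

Lemma aut_equiv_words (w1 w2 : word k) P Q :
  (forall g, wmap w1 g = P (assign g)) -> (forall g, wmap w2 g = Q (assign g)) ->
  aut_equiv k P Q -> Fk_automorphic G w1 w2.
Proof.
by move=> /functional_extensionality E1 /functional_extensionality E2; rewrite /aut_equiv -E1 -E2.
Qed.

(* Transvection x_i -> x_i x_j^q, for distinct variables i, j < k; its inverse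
   is x_i -> x_i (x_j^-1)^q. *)
Lemma aut_equiv_transvection P i j q : i < k -> j < k -> i != j ->
  aut_equiv k P (fun h => P (upd h i (gmul (h i) (gpow (h j) q)))).
Proof.
move=> ik jk ij.
pose tv (y : word k) (o : 'I_k) :=
  if val o == i then wmul (wvar o) (wpow y q) else wvar o.
pose u := tv (xvar k j); pose v := tv (winv (xvar k j)).
have fix_j y (g : 'I_k -> G) : assign (fun o => wmap (tv y o) g) j = assign g j.
  by rewrite !(assign_lt _ jk) /tv /= eq_sym (negbTE ij).
have vu (g : 'I_k -> G) : (fun o => wmap (v o) (fun o' => wmap (u o') g)) = g.
  apply: functional_extensionality => o; rewrite {1}/v /tv.
  case: eqP => oi /=; last by rewrite /u /tv; case: eqP.
  rewrite wmap_pow /= -/(assign _ j) fix_j /u /tv oi eqxx /= wmap_pow.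
  by rewrite -/(assign g j) -gmulA gpowKV gmul1r.
have uv (g : 'I_k -> G) : (fun o => wmap (u o) (fun o' => wmap (v o') g)) = g.
  apply: functional_extensionality => o; rewrite {1}/u /tv.
  case: eqP => oi /=; last by rewrite /v /tv; case: eqP.
  rewrite wmap_pow -/(assign _ j) fix_j /v /tv oi eqxx /= wmap_pow.
  by rewrite -/(assign g j) -gmulA gpowVK gmul1r.
exists (fun f : ('I_k -> G) -> G => fun g => f (fun o => wmap (u o) g)).
split; first exact: subst_aut vu uv.
apply: functional_extensionality => g; congr P.
apply: functional_extensionality => m; rewrite /upd.
case: (ltnP m k) => mk.
  rewrite (assign_lt _ mk) /u /tv /=; case: eqP => [mi|_]; last by rewrite (assign_lt g mk).
  by subst i; rewrite /= wmap_pow -/(assign g j) -(assign_lt g mk).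
have -> : (m == i) = false by apply/negbTE/eqP => mi; move: ik; rewrite -mi ltnNge mk.
by rewrite !assign_ge.
Qed.

Lemma aut_equiv_perm P f f' : perm_below k f f' ->
  aut_equiv k P (fun h => P (fun m => h (f m))).
Proof.
move=> [fk f'k ff' f'f fid].
pose u (o : 'I_k) := xvar k (f o); pose v (o : 'I_k) := xvar k (f' o).
have vu (g : 'I_k -> G) : (fun o => wmap (v o) (fun o' => wmap (u o') g)) = g.
  apply: functional_extensionality => o.
  rewrite /v -/(assign _ _) (assign_lt _ (f'k _ (ltn_ord o))) /u /= ff' //.
  exact: assignE.
have uv (g : 'I_k -> G) : (fun o => wmap (u o) (fun o' => wmap (v o') g)) = g.
  apply: functional_extensionality => o.
  rewrite /u -/(assign _ _) (assign_lt _ (fk _ (ltn_ord o))) /v /= f'f //.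
  exact: assignE.
exists (fun F : ('I_k -> G) -> G => fun g => F (fun o => wmap (u o) g)).
split; first exact: subst_aut vu uv.
apply: functional_extensionality => g; congr P.
apply: functional_extensionality => m.
by case: (ltnP m k) => mk; [rewrite (assign_lt _ mk) | rewrite fid // !assign_ge].
Qed.

End ElementaryMoves.

Definition cpow (G : Grp) (a e : nat) (x y : G) : G := gpow (gcomm x y) (a ^ e).

Fixpoint chain_map (G : Grp) (a p : nat) (es : seq nat) (h : nat -> G) : G :=
  if es is e :: es' then gmul (cpow a e (h p) (h p.+1)) (chain_map a p.+1 es' h)
  else gone G.

Fixpoint pairs_map (G : Grp) (a p : nat) (ts : seq nat) (h : nat -> G) : G :=
  if ts is t :: ts' then gmul (cpow a t (h p) (h p.+1)) (pairs_map a p.+2 ts' h)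
  else gone G.

Lemma chain_map_cat (G : Grp) a p pre e post (h : nat -> G) :
  chain_map a p (pre ++ e :: post) h =
  gmul (chain_map a p pre h)
    (gmul (cpow a e (h (p + size pre)) (h (p + size pre).+1))
          (chain_map a (p + size pre).+1 post h)).
Proof.
elim: pre p => [|e' pre IH] p /=; first by rewrite addn0 gmul1l.
by rewrite IH addSnnS gmulA.
Qed.

Lemma chain_map_ext (G : Grp) a es p p' (h h' : nat -> G) :
  (forall i, i <= size es -> h (p + i) = h' (p' + i)) ->
  chain_map a p es h = chain_map a p' es h'.
Proof.
elim: es p p' => [|e es IH] p p' E //=.
rewrite -(addn0 p) -(addn0 p') -!addnS !E //; congr gmul.
by apply: IH => i hi; rewrite -!addnA; apply: E; rewrite add1n ltnS.
Qed.

Lemma chain_map_upd (G : Grp) a es p (h : nat -> G) i x :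
  i < p \/ p + size es < i -> chain_map a p es (upd h i x) = chain_map a p es h.
Proof. by move=> ip; apply: chain_map_ext => m hm; rewrite upd_neq //; lia. Qed.

Lemma seq_local_min (es : seq nat) : 1 < size es ->
  (exists e1 e2 post, es = [:: e1, e2 & post] /\ e1 <= e2) \/
  (exists pre eL eM, es = pre ++ [:: eL; eM] /\ eM <= eL) \/
  (exists pre eL eM eR post,
      es = pre ++ [:: eL, eM, eR & post] /\ eM <= eL /\ eM <= eR).
Proof.
elim: es => [|e1 es IH] //=; case: es IH => [|e2 rest] IH //= _.
case: (leqP e1 e2) => h12; first by left; exists e1, e2, rest.
right; case: rest IH => [|e3 rest] IH.
  by left; exists [::], e1, e2; split => //; apply: ltnW.
case: (IH isT) => [[e2' [e3' [post [E le]]]]|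
                  [[pre [eL [eM [E le]]]]|[pre [eL [eM [eR [post [E [l1 l2]]]]]]]]].
- case: E => ? ? ?; subst.
  by right; exists [::], e1, e2', e3', post; split => //; split => //; apply: ltnW.
- by left; exists (e1 :: pre), eL, eM; rewrite /= E.
- by right; exists (e1 :: pre), eL, eM, eR, post; rewrite /= E.
Qed.

(* The rotation moving the block p, ..., p+l-1 two places up and the two
   positions p+l, p+l+1 down to p, p+1; rot_inv is its inverse. *)
Definition rot (p l m : nat) : nat :=
  if m < p then m else if m < p + l then m.+2 else if m == p + l then p
  else if m == (p + l).+1 then p.+1 else m.

Definition rot_inv (p l m : nat) : nat :=
  if m < p then m else if m < p.+2 then m + l
  else if m < p + l + 2 then m - 2 else m.

Ltac case_ifs := repeat match goal with |- context [if ?b then _ else _] =>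
  lazymatch b with
  | context [if _ then _ else _] => fail
  | _ => case: (boolP b) => /= ?
  end end; try lia.

Lemma perm_below_rot p l k : p + l + 1 < k -> perm_below k (rot p l) (rot_inv p l).
Proof. by move=> hk; split=> m hm; rewrite /rot /rot_inv; case_ifs. Qed.

Section ChainMoves.
Variables (G : Grp) (HG : comm_central G) (a : nat).
Implicit Types h : nat -> G.

Lemma expn_subK e f : e <= f -> a ^ (f - e) * a ^ e = a ^ f.
Proof. by move=> ef; rewrite -expnD subnK. Qed.

(* Front minimum e1 <= e2: x_p -> x_p x_{p+2}^(a^(e2-e1)) cancels the second link. *)
Lemma front_move p e1 e2 post h : e1 <= e2 ->
  chain_map a p [:: e1, e2 & post] (upd h p (gmul (h p) (gpow (h p.+2) (a ^ (e2 - e1))))) =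
  gmul (cpow a e1 (h p) (h p.+1)) (chain_map a p.+2 post h).
Proof.
move=> le /=; rewrite chain_map_upd; last by lia.
rewrite upd_eq !upd_neq; try lia.
rewrite /cpow gcommX_transl // expn_subK //.
by rewrite -gmulA gcommX_cancel.
Qed.

(* Back minimum eM <= eL: x_{v+2} -> x_{v+2} x_v^(a^(eL-eM)) cancels the link
   before it; what remains after the prefix chain is the isolated last link,
   followed by the (empty) rest, in the shape expected by rotate_link. *)
Lemma back_move p pre eL eM h : eM <= eL ->
  let v := p + size pre in
  chain_map a p (pre ++ [:: eL; eM]) (upd h v.+2 (gmul (h v.+2) (gpow (h v) (a ^ (eL - eM))))) =
  gmul (chain_map a p pre h) (gmul (cpow a eM (h v.+1) (h v.+2)) (gone G)).
Proof.
move=> le v; rewrite chain_map_cat -/v chain_map_upd; last by lia.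
rewrite /= upd_eq !upd_neq; try lia.
rewrite /cpow gcommX_transr // expn_subK //.
by congr gmul; rewrite -gmulA (central_swap _ _ (central_gcommX HG _ _ _)) gcommX_cancelV.
Qed.

(* The intermediate state of an interior reduction: the chain up to x_v, the
   links c_eM(x_{v+1}, x_{v+2}) and c_eR(x_{v+2}, x_{v+3}), a link c_K(x_v, x_{v+3})
   replacing the left neighbour, and the rest of the chain from x_{v+3}. *)
Definition spliced (p : nat) (pre : seq nat) (eM eR K : nat) (post : seq nat)
  (h : nat -> G) : G :=
  let v := p + size pre in
  gmul (chain_map a p pre h)
    (gmul (cpow a eM (h v.+1) (h v.+2))
    (gmul (cpow a eR (h v.+2) (h v.+3))
    (gmul (cpow a K (h v) (h v.+3)) (chain_map a v.+3 post h)))).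

(* Interior minimum eM <= eL, first transvection x_{v+2} -> x_{v+2} x_v^(a^(eL-eM)):
   the left link cancels and a link c(x_v, x_{v+3}) appears. *)
Lemma splice_left p pre eL eM eR post h : eM <= eL ->
  let v := p + size pre in
  chain_map a p (pre ++ [:: eL, eM, eR & post])
    (upd h v.+2 (gmul (h v.+2) (gpow (h v) (a ^ (eL - eM))))) =
  spliced p pre eM eR (eL - eM + eR) post h.
Proof.
move=> le v; rewrite chain_map_cat -/v chain_map_upd; last by lia.
rewrite /= chain_map_upd; last by lia.
rewrite upd_eq !upd_neq; try lia.
rewrite /cpow gcommX_transr // gcommX_transl // expn_subK // -expnD.
congr gmul.
by rewrite -!gmulA (central_swap _ _ (central_gcommX HG _ _ _)) gcommX_cancelV.
Qed.

(* Second transvection x_{v+1} -> x_{v+1} x_{v+3}^(a^(eR-eM)): the right link cancels. *)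
Lemma splice_right p pre eM eR K post h : eM <= eR ->
  let v := p + size pre in
  spliced p pre eM eR K post (upd h v.+1 (gmul (h v.+1) (gpow (h v.+3) (a ^ (eR - eM))))) =
  gmul (chain_map a p pre h)
    (gmul (cpow a eM (h v.+1) (h v.+2))
    (gmul (cpow a K (h v) (h v.+3)) (chain_map a v.+3 post h))).
Proof.
move=> le v; rewrite /spliced -/v !chain_map_upd; try lia.
rewrite upd_eq !upd_neq; try lia.
rewrite {1}/cpow gcommX_transl // expn_subK //.
by rewrite -gmulA gcommX_cancel.
Qed.

Lemma rotate_link p pre M X h :
  let r := rot p (size pre).+1 in let v := p + size pre in
  gmul (chain_map a p pre (fun m => h (r m)))
       (gmul (cpow a M (h (r v.+1)) (h (r v.+2))) X) =
  gmul (cpow a M (h p) (h p.+1)) (gmul (chain_map a p.+2 pre h) X).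
Proof.
move=> r v.
rewrite (@chain_map_ext _ a pre p p.+2 _ h); last first.
  by move=> i hi; rewrite /r /rot; case_ifs; congr h; lia.
have -> : r v.+1 = p by rewrite /r /rot /v; case_ifs.
have -> : r v.+2 = p.+1 by rewrite /r /rot /v; case_ifs.
exact: central_swap (central_gcommX HG _ _ _).
Qed.

Lemma rotate_splice p (pre : seq nat) K post h :
  let r := rot p (size pre).+1 in let v := p + size pre in
  gmul (cpow a K (h (r v)) (h (r v.+3))) (chain_map a v.+3 post (fun m => h (r m))) =
  gmul (cpow a K (h (p.+2 + size pre)) (h (p.+2 + size pre).+1))
       (chain_map a (p.+2 + size pre).+1 post h).
Proof.
move=> r v.
have -> : r v = p.+2 + size pre by rewrite /r /rot /v; case_ifs.
have -> : r v.+3 = (p.+2 + size pre).+1 by rewrite /r /rot /v; case_ifs.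
congr gmul; apply: chain_map_ext => i _.
by rewrite /r /rot /v; case_ifs; congr h; lia.
Qed.

End ChainMoves.

(* R only reads the values at positions below p; it accounts for the pairs
   already split off, which the moves on positions >= p leave untouched. *)
Definition depends_below (G : Grp) (p : nat) (R : (nat -> G) -> G) : Prop :=
  forall h h', (forall m, m < p -> h m = h' m) -> R h = R h'.

Lemma depends_below_cpow (G : Grp) a e p (R : (nat -> G) -> G) : depends_below p R ->
  depends_below p.+2 (fun h => gmul (R h) (cpow a e (h p) (h p.+1))).
Proof.
move=> HR h h' E; rewrite (HR h h'); last by move=> m mp; apply: E; lia.
by rewrite !E //; lia.
Qed.

Section ReductionStep.
Variables (G : Grp) (HG : comm_central G) (a k p : nat) (R : (nat -> G) -> G).
Hypothesis HR : depends_below p R.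

Lemma depends_below_upd h i x : p <= i -> R (upd h i x) = R h.
Proof. by move=> pi; apply: HR => m mp; rewrite upd_neq //; lia. Qed.

Lemma depends_below_rot h l : R (fun m => h (rot p l m)) = R h.
Proof. by apply: HR => m mp; rewrite /rot; case_ifs. Qed.

Lemma front_step e1 e2 post : e1 <= e2 -> p + (size post).+2 < k ->
  aut_equiv k (fun h => gmul (R h) (chain_map a p [:: e1, e2 & post] h))
    (fun h => gmul (gmul (R h) (cpow a e1 (h p) (h p.+1))) (chain_map a p.+2 post h)).
Proof.
move=> le bound.
apply: aut_equiv_trans
  (aut_equiv_transvection (i := p) (j := p.+2) _ (a ^ (e2 - e1)) _ _ _) _; try lia.
apply: aut_equiv_eq => h.
by rewrite depends_below_upd // front_move // gmulA.
Qed.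

Lemma back_step pre eL eM : eM <= eL -> p + (size pre).+2 < k ->
  aut_equiv k (fun h => gmul (R h) (chain_map a p (pre ++ [:: eL; eM]) h))
    (fun h => gmul (gmul (R h) (cpow a eM (h p) (h p.+1))) (chain_map a p.+2 pre h)).
Proof.
move=> le bound; set v := p + size pre.
apply: aut_equiv_trans
  (aut_equiv_transvection (i := v.+2) (j := v) _ (a ^ (eL - eM)) _ _ _) _; try lia.
apply: aut_equiv_trans (aut_equiv_perm _ (perm_below_rot (p := p) (l := (size pre).+1) _)) _.
  by lia.
apply: aut_equiv_eq => h.
rewrite depends_below_upd; last by lia.
rewrite back_move // depends_below_rot rotate_link //.
by rewrite gmul1r gmulA.
Qed.

Lemma interior_step pre eL eM eR post : eM <= eL -> eM <= eR ->
  p + (size pre + (size post).+3) < k ->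
  aut_equiv k (fun h => gmul (R h) (chain_map a p (pre ++ [:: eL, eM, eR & post]) h))
    (fun h => gmul (gmul (R h) (cpow a eM (h p) (h p.+1)))
                   (chain_map a p.+2 (pre ++ (eL - eM + eR) :: post) h)).
Proof.
move=> leL leR bound; set v := p + size pre; set K := eL - eM + eR.
apply: aut_equiv_trans
  (aut_equiv_transvection (i := v.+2) (j := v) _ (a ^ (eL - eM)) _ _ _) _; try lia.
apply: aut_equiv_trans
  (@aut_equiv_eq G k _ (fun h => gmul (R h) (spliced a p pre eM eR K post h)) _) _.
  by move=> h; rewrite depends_below_upd ?splice_left //; lia.
apply: aut_equiv_trans
  (aut_equiv_transvection (i := v.+1) (j := v.+3) _ (a ^ (eR - eM)) _ _ _) _; try lia.
apply: aut_equiv_trans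
  (aut_equiv_perm _ (perm_below_rot (p := p) (l := (size pre).+1) _)) _; first by lia.
apply: aut_equiv_eq => h.
rewrite depends_below_upd; last by lia.
rewrite splice_right // depends_below_rot rotate_link // rotate_splice //.
by rewrite chain_map_cat gmulA.
Qed.

End ReductionStep.

(* A local minimum always exists, so one of the three steps applies; the
   resulting exponents e, es' do not depend on the group. *)
Lemma reduce_step a k p (es : seq nat) : 1 < size es -> p + size es < k ->
  exists e es', size es = (size es').+2 /\
  forall G, comm_central G -> forall R : (nat -> G) -> G, depends_below p R ->
    aut_equiv k (fun h => gmul (R h) (chain_map a p es h))
      (fun h => gmul (gmul (R h) (cpow a e (h p) (h p.+1))) (chain_map a p.+2 es' h)).
Proof.
move=> es2; case: (seq_local_min es2) => [[e1 [e2 [post [-> le]]]]|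
  [[pre [eL [eM [-> le]]]]|[pre [eL [eM [eR [post [-> [leL leR]]]]]]]]] bound.
- by exists e1, post; split=> // G HG R HR; exact: (front_step HG a HR).
- rewrite size_cat /= in bound.
  exists eM, pre; split; first by rewrite size_cat /= addn2.
  move=> G HG R HR; apply: (back_step HG a HR) => //; lia.
- rewrite size_cat /= in bound.
  exists eM, (pre ++ (eL - eM + eR) :: post).
  split; first by rewrite !size_cat /=; lia.
  move=> G HG R HR; apply: (interior_step HG a HR) => //; lia.
Qed.

Lemma chain_reduction a k p (es : seq nat) : p + size es < k ->
  exists ts, size ts = uphalf (size es) /\
  forall G, comm_central G -> forall R : (nat -> G) -> G, depends_below p R ->
    aut_equiv k (fun h => gmul (R h) (chain_map a p es h))
                (fun h => gmul (R h) (pairs_map a p ts h)).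
Proof.
have [N] := ubnP (size es); elim: N es p => // N IH es p sizeN bound.
case: (ltnP (size es) 2) => [short | long].
  exists es; split; first by case: es short {sizeN bound} => [|? []].
  by move=> G HG R HR; apply: aut_equiv_eq => h; case: es short {sizeN bound} => [|? []].
have [e [es' [size_es step]]] := reduce_step a long bound.
have [||ts' [size_ts' reduce_rest]] := IH es' p.+2; try lia.
exists (e :: ts'); split; first by rewrite size_es /= size_ts'.
move=> G HG R HR; apply: aut_equiv_trans (step G HG R HR) _.
apply: aut_equiv_trans (reduce_rest G HG _ (depends_below_cpow a e HR)) _.
by apply: aut_equiv_eq => h /=; rewrite gmulA.
Qed.

Lemma wmap_chain_word (G : Grp) k n a (s : nat -> nat) (g : 'I_k -> G) :
  wmap (chain_word k n a s) g = chain_map a 0 [seq s i | i <- iota 1 n.-1] (assign g).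
Proof.
have shifted p m : wmap (wprod [seq wpow (wcomm (xvar k i.-1) (xvar k i)) (a ^ s i)
                                | i <- iota p.+1 m]) g =
                   chain_map a p [seq s i | i <- iota p.+1 m] (assign g).
  by elim: m p => [|m IH] p //=; rewrite wmap_pow IH.
exact: shifted.
Qed.

Lemma wmap_pair_word (G : Grp) k n a (ts : seq nat) (g : 'I_k -> G) :
  size ts = n./2 ->
  wmap (pair_word k n (fun j => a ^ nth 0 ts j./2)) g = pairs_map a 0 ts (assign g).
Proof.
have shifted q cnt :
    wmap (wprod [seq wpow (wcomm (xvar k m.*2) (xvar k m.*2.+1)) (a ^ nth 0 ts (m.*2.+1)./2)
                | m <- iota q cnt]) g =
    pairs_map a q.*2 [seq nth 0 ts i | i <- iota q cnt] (assign g).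
  by elim: cnt q => [|cnt IH] q //=; rewrite wmap_pow IH uphalf_double doubleS.
by move=> size_ts; rewrite /pair_word -size_ts shifted -/(mkseq _ _) mkseq_nth.
Qed.

Theorem lemma2p6 (k n a : nat) (s : nat -> nat) :
  2 <= n -> n <= k ->
  exists t : nat -> nat,
    (forall j, odd j -> j < n./2.*2 ->
       t j = 0 \/ t j = 1 \/ exists2 r, 0 < r & t j = a ^ r) /\
    (forall G : Grp, nil_class2 G ->
       Fk_automorphic G (chain_word k n a s) (pair_word k n t)).
Proof.
move=> n2 nk.
have [|ts [size_ts reduce]] := @chain_reduction a k 0 [seq s i | i <- iota 1 n.-1].
  by rewrite size_map size_iota; lia.
rewrite size_map size_iota uphalfE prednK ?(leq_trans _ n2) // in size_ts.
exists (fun j => a ^ nth 0 ts j./2); split.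
  move=> j _ _; case: (nth 0 ts j./2) => [|r]; first by right; left.
  by right; right; exists r.+1.
move=> G [HG _]; apply: aut_equiv_words (reduce G HG _ (fun _ _ _ => erefl (gone G))).
  by move=> g; rewrite gmul1l wmap_chain_word.
by move=> g; rewrite gmul1l wmap_pair_word.
Qed.
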